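(* Let $\Omega = \bigcap_{j=1}^n \{x \in \mathbb{R}^d : a_j^{\intercal} x \leq b_j\}$ be a convex polytope of unit diameter containing the origin in its interior, where each $a_j$ is a unit vector and $b_j > 0$. Let $\varepsilon > 0$ and define the lifted body and the expanded body in $\mathbb{R}^{d+1}$ $$\widehat{\Omega} = \{(x;z) : z \geq 0,\ z \leq b_j - a_j^{\intercal}x \ \forall j\},\qquad \widehat{\Omega}^+ = \{(x;z) : z \leq b_j - a_j^{\intercal}x + \varepsilon \ \forall j\}.$$ Let $0 < \lambda_c < 1$. Then there is a constant $c > 0$ depending only on $\lambda_c$ and $d$ such that for every point $p \in \widehat{\Omega}$, the Macbeath ellipsoid $E^{\lambda_c}_{\widehat{\Omega}^+}(p)$ contains the Euclidean ball of radius $c\,\varepsilon$ centered at $p$.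
   Context: For a convex set $K$, a point $p \in K$ and $\lambda > 0$, the $\lambda$-scaled Macbeath region is $M^{\lambda}_K(p) = p + \lambda\big((K - p) \cap (p - K)\big)$, and the Macbeath ellipsoid $E^{\lambda}_K(p)$ is the maximum-volume ellipsoid contained in $M^{\lambda}_K(p)$ (it is centered at $p$). In the paper's data structure these ellipsoids (with centers in $\widehat{\Omega}$) are the covering ellipsoids. *)

From HB Require Import structures.
From mathcomp Require Import all_boot all_order all_algebra.
From mathcomp Require Import classical_sets reals.
Set Implicit Arguments. Unset Strict Implicit. Unset Printing Implicit Defensive.
Import Order.TTheory GRing.Theory Num.Theory.
Local Open Scope ring_scope.
Local Open Scope classical_set_scope.

Definition dotp (R : realType) (k : nat) (u v : 'rV[R]_k) : R :=
  \sum_(i < k) u 0 i * v 0 i.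

Definition enorm (R : realType) (k : nat) (v : 'rV[R]_k) : R :=
  Num.sqrt (dotp v v).

Definition eball (R : realType) (k : nat) (c : 'rV[R]_k) (r : R) : set 'rV[R]_k :=
  [set x | enorm (x - c) <= r].

Definition polytope (R : realType) (d n : nat) (a : 'I_n -> 'rV[R]_d)
  (b : 'I_n -> R) : set 'rV[R]_d :=
  [set x | forall j, dotp (a j) x <= b j].

(* R^{d+1} = 'rV_(d+1); a point (x;z) is row_mx x z, with x = lsubmx y,
   z = rsubmx y 0 0. *)
Definition lifted (R : realType) (d n : nat) (a : 'I_n -> 'rV[R]_d)
  (b : 'I_n -> R) : set 'rV[R]_(d + 1) :=
  [set y | 0 <= rsubmx y 0 0 /\
           forall j, rsubmx y 0 0 <= b j - dotp (a j) (lsubmx y)].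

Definition expanded (R : realType) (d n : nat) (a : 'I_n -> 'rV[R]_d)
  (b : 'I_n -> R) (eps : R) : set 'rV[R]_(d + 1) :=
  [set y | forall j, rsubmx y 0 0 <= b j - dotp (a j) (lsubmx y) + eps].

Definition macbeath (R : realType) (k : nat) (K : set 'rV[R]_k) (p : 'rV[R]_k)
  (lam : R) : set 'rV[R]_k :=
  [set p + lam *: v | v in [set v | K (p + v) /\ K (p - v)]].

(* Ellipsoid with center c and linear map A: { c + u A : |u| <= 1 }.
   Its volume is |det A| times the volume of the unit ball. *)
Definition ellipsoid (R : realType) (k : nat) (c : 'rV[R]_k) (A : 'M[R]_k)
  : set 'rV[R]_k :=
  [set c + u *m A | u in [set u | enorm u <= 1]].

Definition max_vol_ellipsoid_in (R : realType) (k : nat) (S : set 'rV[R]_k)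
  (c : 'rV[R]_k) (A : 'M[R]_k) : Prop :=
  ellipsoid c A `<=` S /\
  forall c' A', ellipsoid c' A' `<=` S -> `|\det A'| <= `|\det A|.

From HB Require Import structures.
From mathcomp Require Import all_boot all_order all_algebra.
From mathcomp Require Import classical_sets reals.
From mathcomp Require Import ring lra.
Import Order.TTheory GRing.Theory Num.Theory.
Local Open Scope ring_scope.
Local Open Scope classical_set_scope.
Set Implicit Arguments. Unset Strict Implicit. Unset Printing Implicit Defensive.

(** The Macbeath region [M] of the expanded body at [p] is convex, symmetric
  about [p], and contains the ball of radius [lamc * eps / 2] around [p]
  (every facet of the expanded body is at distance [eps] beyond [p]).  The
  theorem then follows from a John-type fact: a maximum-volume ellipsoid [E]
  of a convex body [M] that is symmetric about [p] and contains the ball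
  [B(p, r)] contains [B(p, r / 2^k)].  In the coordinates where [E] is the
  unit ball: if the centre of [E] were not [p], the convex hull of [E] and of
  its reflection through [p] would contain an ellipsoid of larger volume,
  stretched along the segment between the two centres; and if a point [y] of
  [B(p, r / 2^k)] were outside [E], then [M] would contain [± h] with
  [h = 2^k (y - p)] of norm [m > 2^k], and the hull of [E] and [± h]
  contains an ellipsoid with semi-axes [m / 2] and [1 / 2], of volume ratio
  [m / 2^k > 1]. *)

Section EuclideanSpace.
Variables (R : realType) (k : nat).
Implicit Types (u v w : 'rV[R]_k) (t : R).

Lemma dotpC u v : dotp u v = dotp v u.
Proof. by apply: eq_bigr => i _; rewrite mulrC. Qed.

Lemma dotpDl u v w : dotp (u + v) w = dotp u w + dotp v w.
Proof. by rewrite /dotp -big_split; apply: eq_bigr => i _; rewrite !mxE mulrDl. Qed.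

Lemma dotpZl t u v : dotp (t *: u) v = t * dotp u v.
Proof. by rewrite /dotp mulr_sumr; apply: eq_bigr => i _; rewrite !mxE mulrA. Qed.

Lemma dotpNl u v : dotp (- u) v = - dotp u v.
Proof. by rewrite -scaleN1r dotpZl mulN1r. Qed.

Lemma dotpDr u v w : dotp w (u + v) = dotp w u + dotp w v.
Proof. by rewrite !(dotpC w) dotpDl. Qed.

Lemma dotpZr t u v : dotp v (t *: u) = t * dotp v u.
Proof. by rewrite !(dotpC v) dotpZl. Qed.

Lemma dotpNr u v : dotp v (- u) = - dotp v u.
Proof. by rewrite !(dotpC v) dotpNl. Qed.

Lemma dotp0r u : dotp u 0 = 0.
Proof. by rewrite /dotp big1 // => i _; rewrite mxE mulr0. Qed.

Lemma dotp_ge0 u : 0 <= dotp u u.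
Proof. by apply: sumr_ge0 => i _; rewrite -expr2 sqr_ge0. Qed.

Lemma dotp_eq0 u : dotp u u = 0 -> u = 0.
Proof.
move=> /eqP; rewrite /dotp psumr_eq0 => [/allP uu0|i _]; last first.
  by rewrite -expr2 sqr_ge0.
apply/matrixP => i j; rewrite (ord1 i) mxE.
by have /implyP/(_ isT) := uu0 j (mem_index_enum _); rewrite mulf_eq0 orbb => /eqP.
Qed.

Lemma dotp_mulmx_tr u v : (u *m v^T) 0 0 = dotp u v.
Proof. by rewrite mxE; apply: eq_bigr => i _; rewrite mxE. Qed.

Lemma enorm_ge0 u : 0 <= enorm u.
Proof. exact: sqrtr_ge0. Qed.

Lemma enorm_sqr u : enorm u ^+ 2 = dotp u u.
Proof. by rewrite sqr_sqrtr // dotp_ge0. Qed.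

Lemma enorm_eq0 u : enorm u = 0 -> u = 0.
Proof. by move=> u0; apply: dotp_eq0; rewrite -enorm_sqr u0 expr0n. Qed.

Lemma enormZ t u : enorm (t *: u) = `|t| * enorm u.
Proof. by rewrite /enorm dotpZl dotpZr mulrA -expr2 sqrtrM ?sqr_ge0 // sqrtr_sqr. Qed.

Lemma enormN u : enorm (- u) = enorm u.
Proof. by rewrite -scaleN1r enormZ normrN1 mul1r. Qed.

Lemma enorm_le1 u : (enorm u <= 1) = (dotp u u <= 1).
Proof. by rewrite /enorm -[X in _ <= X]sqrtr1 ler_sqrt. Qed.

Lemma dotp_sqr_le u v : dotp u v ^+ 2 <= dotp u u * dotp v v.
Proof.
have [/dotp_eq0 ->|vv_neq0] := eqVneq (dotp v v) 0.
  by rewrite !dotp0r expr0n /= mulr0.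
have vv_gt0 : 0 < dotp v v by rewrite lt_def vv_neq0 dotp_ge0.
have := dotp_ge0 (u - (dotp u v / dotp v v) *: v).
rewrite dotpDl !dotpDr !dotpNl !dotpNr !dotpZl !dotpZr (dotpC v u) => ge0.
have e1 : dotp u v / dotp v v * (dotp u v / dotp v v * dotp v v)
    = dotp u v ^+ 2 / dotp v v by field.
have e2 : dotp u v / dotp v v * dotp u v = dotp u v ^+ 2 / dotp v v.
  by rewrite mulrAC expr2.
by rewrite -ler_pdivrMr //; rewrite e1 e2 in ge0; lra.
Qed.

Lemma normr_dotp_le u v : `|dotp u v| <= enorm u * enorm v.
Proof.
rewrite -(@ler_pXn2r _ 2) //= ?nnegrE ?mulr_ge0 ?enorm_ge0 //.
by rewrite real_normK ?num_real // exprMn !enorm_sqr dotp_sqr_le.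
Qed.

Lemma det_rank1_update u v : \det (1%:M + u^T *m v) = 1 + dotp v u.
Proof.
pose L : 'M[R]_(1 + k) := block_mx (1%:M : 'M_1) 0 (- u^T) 1%:M.
pose U1 : 'M[R]_(1 + k) := block_mx (1%:M : 'M_1) v 0 (1%:M + u^T *m v).
pose U2 : 'M[R]_(1 + k) := block_mx (1%:M + v *m u^T : 'M_1) v 0 1%:M.
have conj_LU : L *m U1 = U2 *m L.
  rewrite /L /U1 /U2 !mulmx_block !mulmx1 !mul1mx !mulmx0 !mul0mx !addr0 !add0r.
  by rewrite mulmxN mulNmx addrCA addNr addr0 addrK.
have := congr1 determinant conj_LU; rewrite !det_mulmx det_lblock !det_ublock.
by rewrite !det1 !mul1r mulr1 => ->; rewrite det_mx11 mulr1 mxE mxE dotp_mulmx_tr.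
Qed.

End EuclideanSpace.

Definition is_convex (R : realType) (k : nat) (S : set 'rV[R]_k) :=
  forall x y (t : R), 0 <= t -> t <= 1 -> S x -> S y -> S (t *: x + (1 - t) *: y).

Section EllipsoidsInConvexHulls.
Variables (R : realType) (k : nat) (S : set 'rV[R]_k).
Hypotheses (convS : is_convex S) (ballS : forall u, enorm u <= 1 -> S u).

Lemma ellipsoid_sub_hull_reflected_ball (q : 'rV[R]_k) :
  (forall u, enorm u <= 1 -> S (2 *: q + u)) ->
  ellipsoid q (1%:M + q^T *m ((enorm q)^-1 *: q)) `<=` S.
Proof.
move=> reflS _ [u /= u1 <-]; set c := dotp u q / enorm q.
have c_le1 : `|c| <= 1.
  have [q0|q_neq0] := eqVneq (enorm q) 0; first by rewrite /c q0 invr0 mulr0 normr0.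
  have q_gt0 : 0 < enorm q by rewrite lt_def q_neq0 enorm_ge0.
  rewrite /c normrM normfV (gtr0_norm q_gt0) ler_pdivrMr // mul1r.
  by apply: le_trans (normr_dotp_le u q) _; rewrite ler_piMl ?enorm_ge0.
have -> : q + u *m (1%:M + q^T *m ((enorm q)^-1 *: q))
    = ((1 + c) / 2) *: (2 *: q + u) + (1 - (1 + c) / 2) *: u.
  rewrite mulmxDr mulmx1 mulmxA (mx11_scalar (u *m q^T)) mul_scalar_mx.
  by rewrite dotp_mulmx_tr scalerA -/c; apply/matrixP => i j; rewrite !mxE; field.
move: c_le1; rewrite ler_norml => /andP[? ?].
by apply: convS; [lra | lra | exact: reflS | exact: ballS].
Qed.

(* The point is the convex combination [(a/2) h + (1 - a/2) z] with
   [a = <u, h> / m] and [z = (u - (a / m) h) / (2 - a)] in the unit ball. *)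
Lemma half_stretch_in_hull (h u : 'rV[R]_k) (m : R) :
  S h -> enorm h = m -> 0 < m -> enorm u <= 1 -> 0 <= dotp u h ->
  S (2^-1 *: (u + ((m - 1) / m ^+ 2 * dotp u h) *: h)).
Proof.
move=> Sh hm m_gt0 u1 uh_ge0; set D := dotp u h.
have hh : dotp h h = m ^+ 2 by rewrite -enorm_sqr hm.
have D_le : D <= m.
  apply: le_trans (ler_norm _) _; apply: le_trans (normr_dotp_le u h) _.
  by rewrite hm ler_piMl // ltW.
set a := D / m.
have a_ge0 : 0 <= a by rewrite divr_ge0 // ltW.
have a_le1 : a <= 1 by rewrite ler_pdivrMr // mul1r.
have m_neq0 : m != 0 := lt0r_neq0 m_gt0.
have mD_neq0 : 2 * m - D != 0 by apply/eqP; lra.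
pose z := (2 - a)^-1 *: (u - (a / m) *: h).
have -> : 2^-1 *: (u + ((m - 1) / m ^+ 2 * D) *: h) = (a / 2) *: h + (1 - a / 2) *: z.
  by rewrite /z /a; apply/matrixP => i j; rewrite !mxE; field; rewrite m_neq0 mD_neq0.
apply: convS => //; [lra | lra | apply: ballS].
rewrite enorm_le1 /z dotpZl dotpZr !dotpDl !dotpDr !dotpNl !dotpNr !dotpZl !dotpZr.
rewrite hh (dotpC h u) -/D.
have -> : (2 - a)^-1 * ((2 - a)^-1 * (dotp u u - a / m * D
    + (- (a / m * D) - - (a / m * (a / m * m ^+ 2))))) = (dotp u u - a ^+ 2) / (2 - a) ^+ 2.
  by rewrite /a; field; rewrite m_neq0 mD_neq0.
have a2_gt0 : 0 < 2 - a by lra.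
by rewrite ler_pdivrMr ?exprn_gt0 //; move: u1; rewrite enorm_le1; nra.
Qed.

Lemma ellipsoid_sub_hull_symmetric_segment (h : 'rV[R]_k) (m : R) :
  S h -> S (- h) -> enorm h = m -> 0 < m ->
  ellipsoid 0 (2^-1 *: (1%:M + h^T *m (((m - 1) / m ^+ 2) *: h))) `<=` S.
Proof.
move=> Sh Snh hm m_gt0 _ [u /= u1 <-]; rewrite add0r.
have -> : u *m (2^-1 *: (1%:M + h^T *m (((m - 1) / m ^+ 2) *: h)))
    = 2^-1 *: (u + ((m - 1) / m ^+ 2 * dotp u h) *: h).
  rewrite -scalemxAr mulmxDr mulmx1 mulmxA (mx11_scalar (u *m h^T)).
  by rewrite mul_scalar_mx dotp_mulmx_tr scalerA mulrC.
have [uh_ge0|uh_lt0] := lerP 0 (dotp u h); first exact: half_stretch_in_hull.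
have := @half_stretch_in_hull (- h) u m Snh; rewrite enormN dotpNr oppr_ge0.
by rewrite scalerN mulrN scaleNr opprK; apply=> //; apply: ltW.
Qed.

End EllipsoidsInConvexHulls.

Section MaxVolumeEllipsoid.
Variables (R : realType) (k : nat) (M : set 'rV[R]_k) (p ce : 'rV[R]_k).
Variables (r : R) (A : 'M[R]_k).
Hypotheses (r_gt0 : 0 < r) (convM : is_convex M) (ballM : eball p r `<=` M).
Hypothesis symM : forall v : 'rV[R]_k, M (p + v) -> M (p - v).
Hypothesis maxA : max_vol_ellipsoid_in M ce A.

Let chart (u : 'rV[R]_k) := M (ce + u *m A).

Lemma max_vol_det_gt0 : 0 < `|\det A|.
Proof.
have ball_ellipsoid : ellipsoid p r%:M `<=` M.
  move=> _ [u /= u1 <-]; apply: ballM.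
  rewrite /eball /= addrC addKr mul_mx_scalar enormZ gtr0_norm //.
  by rewrite -[leRHS]mulr1 ler_pM2l.
apply: lt_le_trans (maxA.2 _ _ ball_ellipsoid).
by rewrite det_scalar normrX gtr0_norm // exprn_gt0.
Qed.

Lemma max_vol_unitmx : A \in unitmx.
Proof. by rewrite unitmxE unitfE -normr_gt0 max_vol_det_gt0. Qed.

Lemma chart_convex : is_convex chart.
Proof.
move=> x y t t0 t1 Mx My; rewrite /chart.
have -> : ce + (t *: x + (1 - t) *: y) *m A
    = t *: (ce + x *m A) + (1 - t) *: (ce + y *m A).
  rewrite mulmxDl -!scalemxAl; apply/matrixP => i j; rewrite !mxE; ring.
exact: convM.
Qed.

Lemma unit_ball_sub_chart u : enorm u <= 1 -> chart u.
Proof. by move=> u1; apply: maxA.1; exists u. Qed.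

Lemma chart_ellipsoid_det_le1 q N : ellipsoid q N `<=` chart -> `|\det N| <= 1.
Proof.
move=> qN_chart; have : ellipsoid (ce + q *m A) (N *m A) `<=` M.
  by move=> _ [u u1 <-]; rewrite -addrA mulmxA -mulmxDl; apply: qN_chart; exists u.
move/(maxA.2); rewrite det_mulmx normrM -[leRHS]mul1r.
by rewrite ler_pM2r // max_vol_det_gt0.
Qed.

Lemma max_vol_center : ce = p.
Proof.
pose q := (p - ce) *m invmx A.
have qA : q *m A = p - ce by rewrite mulmxKV // max_vol_unitmx.
have reflect_chart u : enorm u <= 1 -> chart (2 *: q + u).
  move=> u1; have /symM : M (p + (ce - u *m A - p)).
    by rewrite addrC subrK -mulNmx; apply: unit_ball_sub_chart; rewrite enormN.
  rewrite /chart mulmxDl -scalemxAl qA; congr M.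
  by apply/matrixP => i j; rewrite !mxE; ring.
have q0 : enorm q = 0.
  have := chart_ellipsoid_det_le1
    (ellipsoid_sub_hull_reflected_ball chart_convex unit_ball_sub_chart reflect_chart).
  rewrite det_rank1_update dotpZl -enorm_sqr.
  have [//|q_neq0] := eqVneq (enorm q) 0.
  rewrite expr2 mulKf // ger0_norm ?addr_ge0 ?enorm_ge0 //.
  by move: (enorm_ge0 q); lra.
by apply/eqP; rewrite eq_sym -subr_eq0 -qA (enorm_eq0 q0) mul0mx.
Qed.

Lemma eball_sub_max_vol_ellipsoid : eball p (r / 2 ^+ k) `<=` ellipsoid ce A.
Proof.
move=> y; rewrite /eball /= => y_near.
pose g := (y - p) *m invmx A.
have gA : g *m A = y - p by rewrite mulmxKV // max_vol_unitmx.
have [g1|g_gt1] := lerP (enorm g) 1.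
  by exists g => //; rewrite gA max_vol_center addrC subrK.
have two_k_gt0 : (0 : R) < 2 ^+ k by apply: exprn_gt0.
pose h := 2 ^+ k *: g; pose m := enorm h.
have mE : m = 2 ^+ k * enorm g by rewrite /m /h enormZ gtr0_norm.
have m_gt : 2 ^+ k < m by rewrite mE -[ltLHS]mulr1 ltr_pM2l.
have m_gt0 : 0 < m by apply: lt_trans m_gt.
have M_h : M (p + 2 ^+ k *: (y - p)).
  apply: ballM; rewrite /eball /= addrC addKr enormZ gtr0_norm //.
  by rewrite mulrC -ler_pdivlMr.
have chart_h : chart h by rewrite /chart /h -scalemxAl gA max_vol_center.
have chart_Nh : chart (- h).
  by rewrite /chart /h mulNmx -scalemxAl gA max_vol_center; apply: symM.
have := chart_ellipsoid_det_le1 (ellipsoid_sub_hull_symmetric_segment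
  chart_convex unit_ball_sub_chart chart_h chart_Nh erefl m_gt0).
rewrite detZ det_rank1_update dotpZl -enorm_sqr -/m.
have -> : 1 + (m - 1) / m ^+ 2 * m ^+ 2 = m by field; rewrite lt0r_neq0.
rewrite normrM normrX gtr0_norm ?invr_gt0 // gtr0_norm // exprVn.
by rewrite mulrC ler_pdivrMr // mul1r leNgt m_gt.
Qed.

End MaxVolumeEllipsoid.

Section MacbeathRegion.
Variables (R : realType) (k : nat) (K : set 'rV[R]_k) (p : 'rV[R]_k) (lam : R).

Lemma macbeath_convex : is_convex K -> is_convex (macbeath K p lam).
Proof.
move=> convK _ _ t t0 t1 [v1 [Kv1 Kv1'] <-] [v2 [Kv2 Kv2'] <-].
exists (t *: v1 + (1 - t) *: v2); last by apply/matrixP => i j; rewrite !mxE; ring.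
split.
  have -> : p + (t *: v1 + (1 - t) *: v2) = t *: (p + v1) + (1 - t) *: (p + v2).
    by apply/matrixP => i j; rewrite !mxE; ring.
  exact: convK.
have -> : p - (t *: v1 + (1 - t) *: v2) = t *: (p - v1) + (1 - t) *: (p - v2).
  by apply/matrixP => i j; rewrite !mxE; ring.
exact: convK.
Qed.

Lemma macbeath_sym v : macbeath K p lam (p + v) -> macbeath K p lam (p - v).
Proof.
move=> [w [Kw Kw'] /addrI <-]; exists (- w); last by rewrite scalerN.
by rewrite /= opprK.
Qed.

Lemma eball_sub_macbeath rho :
  0 < lam -> eball p rho `<=` K -> eball p (lam * rho) `<=` macbeath K p lam.
Proof.
move=> lam_gt0 ballK y; rewrite /eball /= => y_near.
have lam_neq0 : lam != 0 := lt0r_neq0 lam_gt0.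
pose v := lam^-1 *: (y - p).
have v_small : enorm v <= rho.
  by rewrite /v enormZ gtr0_norm ?invr_gt0 // ler_pdivrMl.
exists v; last by rewrite /v scalerA divff // scale1r addrC subrK.
by split; apply: ballK; rewrite /eball /= addrC ?addKr ?opprD ?addNKr ?enormN.
Qed.

End MacbeathRegion.

Section ExpandedBody.
Variables (R : realType) (d : nat).
Implicit Types (a : 'rV[R]_d) (y v : 'rV[R]_(d + 1)).

Definition facet_form a y := rsubmx y 0 0 + dotp a (lsubmx y).

Lemma facet_formD a y v : facet_form a (y + v) = facet_form a y + facet_form a v.
Proof. by rewrite /facet_form !linearD dotpDr !mxE; ring. Qed.

Lemma facet_formZ a (t : R) y : facet_form a (t *: y) = t * facet_form a y.
Proof. by rewrite /facet_form !linearZ dotpZr !mxE; ring. Qed.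

Lemma expandedE n (a : 'I_n -> 'rV[R]_d) b eps y :
  expanded a b eps y <-> forall j, facet_form (a j) y <= b j + eps.
Proof. by rewrite /expanded /facet_form; split => le_y j; have := le_y j; lra. Qed.

Lemma expanded_convex n (a : 'I_n -> 'rV[R]_d) b eps : is_convex (expanded a b eps).
Proof.
move=> x y t t0 t1 /expandedE le_x /expandedE le_y; apply/expandedE => j.
by rewrite facet_formD !facet_formZ; have := le_x j; have := le_y j; nra.
Qed.

Lemma dotp_lrsubmx y : dotp y y = dotp (lsubmx y) (lsubmx y) + rsubmx y 0 0 ^+ 2.
Proof.
rewrite /dotp big_split_ord big_ord1 expr2; congr (_ + _).
  by apply: eq_bigr => i _; rewrite !mxE.
by rewrite !mxE.
Qed.

Lemma normr_facet_form_le a v : enorm a = 1 -> `|facet_form a v| <= 2 * enorm v.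
Proof.
move=> a1; have z_le : `|rsubmx v 0 0| <= enorm v.
  by rewrite -sqrtr_sqr; apply: ler_wsqrtr; rewrite dotp_lrsubmx lerDr dotp_ge0.
have x_le : `|dotp a (lsubmx v)| <= enorm v.
  apply: le_trans (normr_dotp_le _ _) _; rewrite a1 mul1r; apply: ler_wsqrtr.
  by rewrite dotp_lrsubmx lerDl sqr_ge0.
by apply: le_trans (ler_normD _ _) _; lra.
Qed.

Lemma eball_sub_expanded n (a : 'I_n -> 'rV[R]_d) b eps p :
  (forall j, enorm (a j) = 1) -> lifted a b p -> eball p (eps / 2) `<=` expanded a b eps.
Proof.
move=> a1 [_ p_le] y; rewrite /eball /= => y_near; apply/expandedE => j.
have := normr_facet_form_le (y - p) (a1 j); rewrite ler_norml => /andP[_ yp_le].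
have p_facet : facet_form (a j) p <= b j by have := p_le j; rewrite /facet_form; lra.
by rewrite -(subrK p y) facet_formD; lra.
Qed.

End ExpandedBody.

Theorem lemma8 (R : realType) (d : nat) (lamc : R) :
  0 < lamc < 1 ->
  exists c : R, 0 < c /\
  forall (n : nat) (a : 'I_n -> 'rV[R]_d) (b : 'I_n -> R) (eps : R),
    (forall j, enorm (a j) = 1) ->
    (forall j, 0 < b j) ->
    (* origin in the interior of Omega *)
    (exists r : R, 0 < r /\ eball 0 r `<=` polytope a b) ->
    (* Omega has unit diameter *)
    (forall x y, polytope a b x -> polytope a b y -> enorm (x - y) <= 1) ->
    (forall e : R, 0 < e -> exists x y, polytope a b x /\ polytope a b y /\
                               1 - e < enorm (x - y)) ->
    0 < eps ->
    forall (p : 'rV[R]_(d + 1)), lifted a b p ->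
    forall (ce : 'rV[R]_(d + 1)) (A : 'M[R]_(d + 1)),
      max_vol_ellipsoid_in (macbeath (expanded a b eps) p lamc) ce A ->
      eball p (c * eps) `<=` ellipsoid ce A.
Proof.
move=> /andP[lamc_gt0 _].
exists (lamc / 2 / 2 ^+ (d + 1)); split; first by rewrite !divr_gt0 ?exprn_gt0.
move=> n a b eps a1 _ _ _ _ eps_gt0 p p_lifted ce A maxA.
have ballM := eball_sub_macbeath lamc_gt0 (eball_sub_expanded (eps := eps) a1 p_lifted).
have -> : lamc / 2 / 2 ^+ (d + 1) * eps = lamc * (eps / 2) / 2 ^+ (d + 1) by ring.
apply: (eball_sub_max_vol_ellipsoid _ _ ballM _ maxA).
- by rewrite mulr_gt0 ?divr_gt0.
- exact/macbeath_convex/expanded_convex.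
- exact: macbeath_sym.
Qed.
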